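(* Let $\Gamma$ be a finite undirected simple graph which is a disjoint union $\Gamma=\bigsqcup_{i=1}^k\Gamma^{(i)}$ of graphs, the vertices of $\Gamma^{(i)}$ being $x^{(i)}_1,\dots,x^{(i)}_{n^{(i)}}$, and let $y_1,\dots,y_N$ be the commutator generators of $G_\Gamma$. Let $z^{(i)}_j,t_l\in\mathbb{Z}$ be such that there exist $i_1\neq i_2$ and indices $j_1,j_2$ with $z^{(i_1)}_{j_1}\neq0$ and $z^{(i_2)}_{j_2}\neq0$. Then \[Z_{G_\Gamma}\Big(\prod_i\prod_j (x^{(i)}_j)^{z^{(i)}_j}\prod_{l=1}^N y_l^{t_l}\Big)=\Big\langle\prod_i\prod_j (x^{(i)}_j)^{z^{(i)}_j/d}\Big\rangle\times\gamma_2(G_\Gamma)\cong\mathbb{Z}^{N+1},\] where $d=\gcd_{i,j}z^{(i)}_j$ and $Z_{G_\Gamma}$ denotes the centralizer.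
   Context: For a finite undirected simple graph $\Gamma$ with vertex set $\{x_1,\dots,x_n\}$ and edge set $E$, the group $G_\Gamma$ is defined by the presentation with generators $x_1,\dots,x_n$ and $y_{i,j}$ for each pair $i<j$ with $x_ix_j\notin E$, and relations $[x_j,x_i]=1$ if $x_ix_j\in E$; $[x_j,x_i]=y_{i,j}$ if $x_ix_j\notin E$ and $i<j$; and $[x_l,y_{i,j}]=1$ for all $l$ and all such $y_{i,j}$. $N$ is the number of non-adjacent pairs and the $y_{i,j}$ are enumerated $y_1,\dots,y_N$; they generate $\gamma_2(G_\Gamma)=[G_\Gamma,G_\Gamma]\cong\mathbb{Z}^N$. The disjoint union of graphs has as vertex and edge sets the disjoint unions of those of the pieces. The products $\prod_i\prod_j$ are taken in a fixed order of the vertices. *)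

From mathcomp Require Import all_boot all_order all_algebra.
Set Implicit Arguments. Unset Strict Implicit. Unset Printing Implicit Defensive.
Import Order.TTheory GRing.Theory Num.Theory.
Local Open Scope ring_scope.

(* Concrete normal-form model of G_Gamma for a graph on vertices 'I_n
   with adjacency relation e.  An element (a, s) stands for
     x_0^{a_0} x_1^{a_1} ... x_{n-1}^{a_{n-1}} * prod_{(i,j)} y_{i,j}^{s(i,j)}
   where s is supported on the non-adjacent pairs i < j (see [gwf]).
   Commutator convention [u,v] = u^-1 v^-1 u v, so x_j x_i = x_i x_j y_{i,j}
   for i < j non-adjacent; the y's are central. *)

Definition gelt (n : nat) :=
  ({ffun 'I_n -> int} * {ffun 'I_n * 'I_n -> int})%type.

Definition nonadj (n : nat) (e : rel 'I_n) (p : 'I_n * 'I_n) : bool :=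
  ((p.1 < p.2)%N && ~~ e p.1 p.2).

Definition ywf (n : nat) (e : rel 'I_n) (u : {ffun 'I_n * 'I_n -> int}) : Prop :=
  forall p, ~~ nonadj e p -> u p = 0.

Definition gwf (n : nat) (e : rel 'I_n) (g : gelt n) : Prop := ywf e g.2.

Definition cocyc (n : nat) (e : rel 'I_n) (a b : {ffun 'I_n -> int})
  : {ffun 'I_n * 'I_n -> int} :=
  [ffun p => if nonadj e p then a p.2 * b p.1 else 0].

Definition gmul (n : nat) (e : rel 'I_n) (g h : gelt n) : gelt n :=
  ([ffun i => g.1 i + h.1 i], [ffun p => g.2 p + h.2 p + cocyc e g.1 h.1 p]).

Definition gone (n : nat) : gelt n := ([ffun _ => 0], [ffun _ => 0]).

Definition ginv (n : nat) (e : rel 'I_n) (g : gelt n) : gelt n :=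
  ([ffun i => - g.1 i], [ffun p => - g.2 p + cocyc e g.1 g.1 p]).

Definition gpown (n : nat) (e : rel 'I_n) (g : gelt n) (m : nat) : gelt n :=
  iter m (fun x => gmul e x g) (gone n).

Definition gpowz (n : nat) (e : rel 'I_n) (g : gelt n) (m : int) : gelt n :=
  match m with
  | Posz k => gpown e g k
  | Negz k => ginv e (gpown e g k.+1)
  end.

Definition xword (n : nat) (a : {ffun 'I_n -> int}) : gelt n := (a, [ffun _ => 0]).

Definition yword (n : nat) (u : {ffun 'I_n * 'I_n -> int}) : gelt n := ([ffun _ => 0], u).

Definition gcd_all (n : nat) (z : {ffun 'I_n -> int}) : int :=
  foldr gcdz 0 [seq z i | i <- enum 'I_n].

(* Two normal forms x^a y^s and x^b y^u commute iff a_j b_i = b_j a_i for every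
   non-adjacent pair i < j.  Vertices in different components are never
   adjacent, and z is nonzero in two components, so these relations force
   a = m (z/d) for an integer m (z_j1 divides a_j1 z_i for all i, hence
   a_j1 d).  Conversely the m-th power of x^w has normal form
   x^(m w) y^(binom(m,2) c(w,w)), so (m, u) |-> (x^w)^m y^u, w = z/d, is an
   injective homomorphism onto the centralizer. *)

From mathcomp Require Import all_boot all_order all_algebra.
From mathcomp Require Import zify ring.
Import Order.TTheory GRing.Theory Num.Theory.
Local Open Scope ring_scope.
Set Implicit Arguments. Unset Strict Implicit. Unset Printing Implicit Defensive.

Definition tri (m : int) : int :=
  match m with Posz k => 'C(k, 2)%:Z | Negz k => 'C(k.+2, 2)%:Z end.

Lemma tri_spec m : 2 * tri m = m * (m - 1).
Proof.
have bin2E k : (2 * 'C(k, 2) = k * k.-1)%N by rewrite -mul_bin_diag bin1.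
by case: m => k /=; [have := bin2E k | have := bin2E k.+2]; rewrite ?NegzE; nia.
Qed.

Lemma triD m1 m2 : tri (m1 + m2) = tri m1 + tri m2 + m1 * m2.
Proof. have := tri_spec m1; have := tri_spec m2; have := tri_spec (m1 + m2); lia. Qed.

Lemma triN m : tri (- m) = m * m - tri m.
Proof. have := tri_spec m; have := tri_spec (- m); lia. Qed.

Section Model.
Variables (n : nat) (e : rel 'I_n).

Definition xpow (w : {ffun 'I_n -> int}) (m : int) : gelt n :=
  ([ffun i => m * w i], [ffun p => tri m * cocyc e w w p]).

Lemma gmul_yword (g : gelt n) u :
  gmul e g (yword u) = (g.1, [ffun p => g.2 p + u p]).
Proof.
congr pair; apply/ffunP => p; rewrite !ffunE ?addr0 //.
by case: ifP; rewrite ?ffunE ?mulr0 addr0.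
Qed.

Lemma gmul_yword_interchange g h u1 u2 :
  gmul e (gmul e g (yword u1)) (gmul e h (yword u2))
  = gmul e (gmul e g h) (yword [ffun p => u1 p + u2 p]).
Proof.
rewrite !gmul_yword; congr pair; apply/ffunP => p; rewrite !ffunE //=; ring.
Qed.

Lemma xpowD w m1 m2 : gmul e (xpow w m1) (xpow w m2) = xpow w (m1 + m2).
Proof.
congr pair; apply/ffunP => p; rewrite !ffunE /=; first ring.
by rewrite triD; case: (nonadj e p); ring.
Qed.

Lemma xpow1 w : xpow w 1 = xword w.
Proof. by congr pair; apply/ffunP => p; rewrite !ffunE ?mul1r ?mul0r. Qed.

Lemma ginv_xpow w m : ginv e (xpow w m) = xpow w (- m).
Proof.
congr pair; apply/ffunP => p; rewrite !ffunE /=; first ring.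
by rewrite triN; case: (nonadj e p); ring.
Qed.

Lemma gpowz_xword w m : gpowz e (xword w) m = xpow w m.
Proof.
have gpown_xword k : gpown e (xword w) k = xpow w k.
  elim: k => [|k IHk].
    by congr pair; apply/ffunP => p; rewrite !ffunE ?mul0r.
  by rewrite /gpown iterS -/(gpown _ _ k) IHk -xpow1 xpowD intS addrC.
by case: m => k; rewrite /gpowz gpown_xword // ginv_xpow NegzE.
Qed.

Lemma gmul_commuteP (g h : gelt n) :
  gmul e h g = gmul e g h <->
  forall p, nonadj e p -> h.1 p.2 * g.1 p.1 = g.1 p.2 * h.1 p.1.
Proof.
split=> [gh p np | hg].
  have := congr1 (fun x : gelt n => x.2 p) gh.
  by rewrite /= !ffunE np [g.2 p + _]addrC => /addrI.
rewrite /gmul; congr pair; apply/ffunP => p; rewrite !ffunE; first exact: addrC.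
by case: ifP => [/hg ->|_]; ring.
Qed.

Lemma xpow_yword_inj (w : {ffun 'I_n -> int}) j m1 m2 u1 u2 : w j != 0 ->
  gmul e (xpow w m1) (yword u1) = gmul e (xpow w m2) (yword u2) ->
  m1 = m2 /\ u1 = u2.
Proof.
rewrite !gmul_yword => wj0 [/ffunP/(_ j) /[!ffunE] /(mulIf wj0) <- /ffunP u12].
by split=> //; apply/ffunP => p; have := u12 p; rewrite !ffunE => /addrI.
Qed.

Lemma xpow_ywordP (h : gelt n) (w : {ffun 'I_n -> int}) m : gwf e h ->
  h.1 = [ffun i => m * w i] <->
  exists u, ywf e u /\ h = gmul e (xpow w m) (yword u).
Proof.
move=> hwf; split=> [h1 | [u [_ ->]]]; last by rewrite gmul_yword.
exists [ffun p => h.2 p - tri m * cocyc e w w p]; split.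
  by move=> p np; rewrite !ffunE (negbTE np) hwf // mulr0 subr0.
rewrite gmul_yword /= -h1; case: h {h1 hwf} => a s /=; congr pair.
by apply/ffunP => p; rewrite !ffunE addrC subrK.
Qed.

End Model.

Lemma proportional_across_components (R : idomainType) (I : Type) (K : eqType)
    (comp : I -> K) (a z : I -> R) j1 j2 :
  comp j1 != comp j2 -> z j1 != 0 -> z j2 != 0 ->
  (forall u v, comp u != comp v -> a v * z u = z v * a u) ->
  forall v, z j1 * a v = a j1 * z v.
Proof.
move=> c12 z1 z2 cross v; have [cv1|] := eqVneq (comp v) (comp j1); last first.
  by move/cross ->; rewrite mulrC.
have cv2 : comp v != comp j2 by rewrite cv1.
have c21 : comp j2 != comp j1 by rewrite eq_sym.
apply: (mulfI z2).
by rewrite mulrCA -(cross _ _ cv2) [z j1 * _]mulrA -(cross _ _ c21); ring.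
Qed.

Lemma gcd_all_dvd n (z : {ffun 'I_n -> int}) i : (gcd_all z %| z i)%Z.
Proof.
rewrite /gcd_all; have: i \in enum 'I_n by rewrite mem_enum.
elim: (enum 'I_n) => //= j r IHr; rewrite inE => /orP[/eqP->|/IHr].
  exact: dvdz_gcdl.
exact: dvdz_trans (dvdz_gcdr _ _).
Qed.

Lemma dvdz_mul_gcd_all n (z : {ffun 'I_n -> int}) c b :
  (forall i, (c %| b * z i)%Z) -> (c %| b * gcd_all z)%Z.
Proof.
move=> cbz; rewrite /gcd_all; elim: (enum 'I_n) => /= [|j r IHr].
  by rewrite mulr0 dvdz0.
suff: (c %| `|b|%:Z * gcdz (z j) (foldr gcdz 0 [seq z i | i <- r]))%Z.
  by rewrite !dvdzE !abszM.
by rewrite mulz_gcdr dvdz_gcd cbz; move: IHr; rewrite !dvdzE !abszM.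
Qed.

Definition primitive n (z : {ffun 'I_n -> int}) : {ffun 'I_n -> int} :=
  [ffun i => (z i %/ gcd_all z)%Z].

Lemma primitiveK n (z : {ffun 'I_n -> int}) i : primitive z i * gcd_all z = z i.
Proof. by rewrite ffunE divzK ?gcd_all_dvd. Qed.

Lemma proportional_primitive n (z a : {ffun 'I_n -> int}) j : z j != 0 ->
  (forall v, z j * a v = a j * z v) ->
  exists m, a = [ffun i => m * primitive z i].
Proof.
move=> zj0 prop; have /dvdzP[m Em] : (z j %| a j * gcd_all z)%Z.
  by apply: dvdz_mul_gcd_all => i; rewrite -prop dvdz_mulr.
exists m; apply/ffunP => v; rewrite ffunE; apply: (mulfI zj0).
by rewrite prop -(primitiveK z v) mulrCA Em; ring.
Qed.

Section Centralizer.
Variables (n k : nat) (e : rel 'I_n) (comp : 'I_n -> 'I_k).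
Hypothesis e_sym : symmetric e.
Hypothesis comp_union : forall i j : 'I_n, e i j -> comp i = comp j.

Lemma cross_component_nonadj (P : 'I_n -> 'I_n -> Prop) :
  (forall u v, P u v -> P v u) -> (forall p, nonadj e p -> P p.1 p.2) ->
  forall u v, comp u != comp v -> P u v.
Proof.
move=> P_sym P_nonadj u v cuv.
have euv : ~~ e u v by apply: contra cuv => /comp_union ->.
case: (ltngtP u v) => [uv|vu|/val_inj uv]; last by rewrite uv eqxx in cuv.
  by apply: (P_nonadj (u, v)); rewrite /nonadj /= uv euv.
by apply/P_sym/(P_nonadj (v, u)); rewrite /nonadj /= vu e_sym euv.
Qed.

Lemma nonadj_proportional_primitiveP (z a : {ffun 'I_n -> int}) j1 j2 :
  comp j1 != comp j2 -> z j1 != 0 -> z j2 != 0 ->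
  (forall p, nonadj e p -> a p.2 * z p.1 = z p.2 * a p.1) <->
  exists m, a = [ffun i => m * primitive z i].
Proof.
move=> c12 z1 z2; split=> [comm | [m ->] p _]; last first.
  by rewrite -(primitiveK z p.1) -(primitiveK z p.2) !ffunE; ring.
apply: (proportional_primitive z1); apply: (proportional_across_components c12 z1 z2).
by apply: cross_component_nonadj => [u v|]; [lia | exact: comm].
Qed.

End Centralizer.

Theorem lemma6p1 (n k : nat) (e : rel 'I_n)
  (e_sym : symmetric e) (e_irr : irreflexive e)
  (comp : 'I_n -> 'I_k)
  (comp_union : forall i j : 'I_n, e i j -> comp i = comp j)
  (z : {ffun 'I_n -> int}) (t : {ffun 'I_n * 'I_n -> int})
  (t_wf : ywf e t)
  (two_pieces : exists j1 j2 : 'I_n,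
      [/\ comp j1 != comp j2, z j1 != 0 & z j2 != 0]) :
  let g := gmul e (xword z) (yword t) in
  let d := gcd_all z in
  let g0 := xword [ffun i => (z i %/ d)%Z] in
  (forall h : gelt n, gwf e h ->
     (gmul e h g = gmul e g h <->
      exists (m : int) (u : {ffun 'I_n * 'I_n -> int}),
        ywf e u /\ h = gmul e (gpowz e g0 m) (yword u)))
  /\ (forall (m1 m2 : int) (u1 u2 : {ffun 'I_n * 'I_n -> int}),
        ywf e u1 -> ywf e u2 ->
        gmul e (gmul e (gpowz e g0 m1) (yword u1))
               (gmul e (gpowz e g0 m2) (yword u2))
        = gmul e (gpowz e g0 (m1 + m2)) (yword [ffun p => u1 p + u2 p]))
  /\ (forall (m1 m2 : int) (u1 u2 : {ffun 'I_n * 'I_n -> int}),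
        ywf e u1 -> ywf e u2 ->
        gmul e (gpowz e g0 m1) (yword u1) = gmul e (gpowz e g0 m2) (yword u2) ->
        m1 = m2 /\ u1 = u2).
Proof.
move=> g d g0; case: two_pieces => j1 [j2 [c12 z1 z2]].
have g0E m : gpowz e g0 m = xpow e (primitive z) m := gpowz_xword e (primitive z) m.
have w1 : primitive z j1 != 0.
  by apply: contra z1 => /eqP w0; rewrite -primitiveK w0 mul0r.
split; [|split] => [h hwf | m1 m2 u1 u2 _ _ | m1 m2 u1 u2 _ _]; last first.
- by rewrite !g0E; apply: xpow_yword_inj w1.
- by rewrite !g0E gmul_yword_interchange xpowD.
rewrite gmul_commuteP.
have -> : g.1 = z by rewrite /g gmul_yword.
rewrite (nonadj_proportional_primitiveP e_sym comp_union _ c12 z1 z2).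
split=> [[m /(xpow_ywordP _ _ hwf) [u hu]] | [m [u [_ ->]]]]; exists m.
  by exists u; rewrite g0E.
by rewrite g0E gmul_yword.
Qed.
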